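(* For each $\alpha\in\mathbb Z$, the generic locus of the connected component $\mathrm{Bun}^\alpha_{\mathcal G'}$ consists of exactly one element, namely the bundle labelled by the pair $(\tilde w_1^\alpha,\mathring g)$.
   Context: $k$ finite field, $G=\mathrm{GL}_n$, $X=\mathbb P^1$ with coordinate $s$ at $\infty$, $t=s^{-1}$ at $0$. $\mathcal G'$ is the group scheme over $X$ with generic fibre $\mathrm{GL}_n$ and $\mathcal G'(\mathcal O_0)=I^{\mathrm{opp}}$ (preimage of lower triangular matrices in $\mathrm{GL}_n(k[[t]])$), $\mathcal G'(\mathcal O_1)=\mathtt Q$ (preimage of the mirabolic $Q$ = matrices with last row $(0,\dots,0,1)$), $\mathcal G'(\mathcal O_\infty)=I$ (preimage of upper triangular matrices in $\mathrm{GL}_n(k[[s]])$), and $\mathrm{GL}_n(\mathcal O_x)$ elsewhere. Its components $\mathrm{Bun}^\alpha_{\mathcal G'}$ are indexed by the degree $\alpha$ of the underlying vector bundle; the generic locus of a component is the open substack of bundles whose automorphism group has minimal dimension. Bundles are labelled by pairs $(\tilde w,g)$ with $\tilde w\in\widetilde W$ (monomial matrices $w\,\mathrm{diag}(s^{\lambda_i})$) giving the Birkhoff cell $I^-\tilde wI$ of the bundle with levels at $0,\infty$ only (here $I^-=\{g\in\mathrm{GL}_n(k[s^{-1}]):g|_{s^{-1}=0}\text{ lower triangular}\}$), and $g\in\mathrm{GL}_n/Q$ the level at $1$. $\Omega=\{\tilde w\in\widetilde W:\tilde wI\tilde w^{-1}=I\}$, and $\tilde w_1\in\Omega$ is the element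 with $\mathrm{ord}_s\det\tilde w_1=1$ ($\mathrm{ord}\circ\det:\Omega\to\mathbb Z$ is an isomorphism). $w_1$ is the permutation matrix of $(1\,n)$ and $\mathring g=\exp(\sum_{j=2}^nE_{1j})w_1Q\in\mathrm{GL}_n/Q$. *)

From mathcomp Require Import all_boot all_order fingroup perm all_algebra.
Set Implicit Arguments. Unset Strict Implicit. Unset Printing Implicit Defensive.
Import GRing.Theory Num.Theory.
Local Open Scope ring_scope.

(* An element (sigma, lambda) stands for the monomial matrix                 *)
(*     w~ = w * diag(s^lambda_1, ..., s^lambda_n),                           *)
(* where w is the permutation matrix with w_{a b} = [a = sigma b]; so        *)
(*     w~_{a b} = [a = sigma b] * s^(lambda b).                              *)
Record affW (n : nat) := AffW { aw_perm : 'S_n ; aw_exp : {ffun 'I_n -> int} }.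

(* matrix product: (sigma,lambda)(tau,mu) = (sigma o tau, lambda o tau + mu);
   note (p * q) x = q (p x) for mathcomp permutations. *)
Definition aw_mul n (x y : affW n) : affW n :=
  AffW (aw_perm y * aw_perm x)%g
       [ffun b => aw_exp x (aw_perm y b) + aw_exp y b].
Definition aw_one n : affW n := AffW 1 [ffun => 0].
Definition aw_inv n (x : affW n) : affW n :=
  AffW ((aw_perm x)^-1)%g [ffun b => - aw_exp x (((aw_perm x)^-1)%g b)].
Definition aw_pow n (x : affW n) (a : int) : affW n :=
  match a with
  | Posz m => iter m (aw_mul x) (aw_one n)
  | Negz m => iter m.+1 (aw_mul (aw_inv x)) (aw_one n)
  end.

(* ord_s det w~ (det w~ = +- s^(sum lambda)); this is also the degree of the
   underlying vector bundle, indexing the components Bun^alpha. *)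
Definition ord_det n (x : affW n) : int := \sum_i aw_exp x i.

(* The generator w~_1 of Omega: sigma(i) = i - 1 mod n, lambda = e_1.
   One checks w~ I w~^-1 = I: conjugation sends entry (c,d) to
   (sigma c, sigma d) with valuation shifted by lambda c - lambda d, and
   lambda c - lambda d + [c > d] = [sigma c > sigma d] for all c, d. *)
Definition w1tilde n : affW n :=
  AffW (perm (@ord_pred_inj n))
       [ffun i : 'I_n => if val i == 0%N then 1 else 0].

(* The bundle labelled w~ is the double coset I^- w~ I; its automorphism    *)
(* group is I^- \cap w~ I w~^-1, a group of matrices h with entries in      *)
(* k[t], t = s^-1.  h lies in the (linear) endomorphism space iff           *)
(*   * h(t = 0) is lower triangular, and                                    *)
(*   * w~^-1 h w~ has entries in k[[s]] and is upper triangular mod s;      *)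
(*     its (i,j) entry is s^(lambda j - lambda i) h_{sigma i, sigma j}.     *)
(* allowed x a b d  <=>  the monomial t^d may occur in entry (a,b).         *)
Definition allowed n (x : affW n) (a b : 'I_n) (d : nat) : bool :=
  let i := ((aw_perm x)^-1)%g a in
  let j := ((aw_perm x)^-1)%g b in
  let e := aw_exp x j - aw_exp x i in
  [&& (d == 0%N) ==> (b <= a)%N, (d%:Z <= e) & ((j < i)%N ==> (d%:Z < e))].

Section Bundles.
Variable K : fieldType.

Definition is_end n (x : affW n) (h : 'M[{poly K}]_n) : Prop :=
  forall a b d, ~~ allowed x a b d -> (h a b)`_d = 0.

Definition is_aut n (x : affW n) (h : 'M[{poly K}]_n) : Prop :=
  is_end x h /\ \det h \is a GRing.unit.

Definition eval1 n (h : 'M[{poly K}]_n) : 'M[K]_n := map_mx (fun p => p.[1]) h.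

Definition in_Q n (q : 'M[K]_n.+1) : Prop :=
  forall j, q ord_max j = (j == ord_max)%:R.

(* Bundles of G' are labelled by (w~, g) with g in GL_n(K) (g Q its class).
   (x,g) and (y,g') are isomorphic iff x = y (Birkhoff decomposition) and
   g' Q = h(1) g Q for some automorphism h of the bundle labelled x. *)
Definition bun_iso n (x : affW n.+1) (g : 'M[K]_n.+1)
                     (y : affW n.+1) (g' : 'M[K]_n.+1) : Prop :=
  x = y /\ exists h, is_aut x h /\ in_Q (invmx (eval1 h *m g) *m g').

(* Aut = { h in End(x) : det h unit, g^-1 h(1) g in Q }, an open subset
   of an affine subspace of the finite dimensional space End(x); its
   dimension is that of the linear space (= its Lie algebra)
     { X in End(x) : g^-1 X(1) g has zero last row }.
   End(x) is realized inside polynomial matrices of degree < deg_bound x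
   (entries of End(x) have degree <= lambda j - lambda i <= sum |lambda|),
   an element X : 'I_D -> 'M_n standing for sum_d X_d t^d. *)
Definition deg_bound n (x : affW n) : nat := (\sum_i `|aw_exp x i|%N)%N.+1.

Definition end_mask n (x : affW n)
  (X : {ffun 'I_(deg_bound x) -> 'M[K]_n}) : {ffun 'I_(deg_bound x) -> 'M[K]_n} :=
  [ffun d : 'I_(deg_bound x) => \matrix_(a, b) if allowed x a b d then 0 else X d a b].

Definition stab_map n (x : affW n.+1) (g : 'M[K]_n.+1)
  (X : {ffun 'I_(deg_bound x) -> 'M[K]_n.+1}) : 'rV[K]_n.+1 :=
  row ord_max (invmx g *m (\sum_d X d) *m g).

Definition aut_lie n (x : affW n.+1) (g : 'M[K]_n.+1)
    : {vspace {ffun 'I_(deg_bound x) -> 'M[K]_n.+1}} :=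
  (lker (linfun (@end_mask n.+1 x)) :&: lker (linfun (stab_map g)))%VS.

Definition aut_dim n (x : affW n.+1) (g : 'M[K]_n.+1) : nat := \dim (aut_lie x g).

Definition generic_locus n (alpha : int) (x : affW n.+1) (g : 'M[K]_n.+1) : Prop :=
  [/\ ord_det x = alpha, g \in unitmx &
      forall (y : affW n.+1) (g' : 'M[K]_n.+1),
        ord_det y = alpha -> g' \in unitmx -> (aut_dim x g <= aut_dim y g')%N].

(* ring{g} = exp(sum_{j>=2} E_{1j}) w_1, with w_1 the permutation matrix of
   (1 n); the nilpotent N = sum_{j>=2} E_{1j} has N^2 = 0, so exp N = 1 + N. *)
Definition gring n : 'M[K]_n.+1 :=
  (1%:M + \matrix_(i, j) (((i == ord0) && (j != ord0)) %:R : K))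
    *m tperm_mx ord0 ord_max.

End Bundles.

(* The automorphism group of the bundle (x, g) has dimension zero exactly
   when I^- \cap x I x^-1 is the constant diagonal torus and this torus acts
   on g Q with trivial stabiliser.  The torus rescales the last row of g^-1,
   which determines g Q, so the second condition says that this row has no
   zero entry: these cosets form the single torus orbit of ring{g}.  The first
   condition says that x normalises I, which singles out the powers of w~_1,
   one in each degree.  As (w~_1^alpha, ring{g}) does have dimension zero, it
   is the only bundle in the generic locus of Bun^alpha. *)

From HB Require Import structures.
From mathcomp Require Import all_boot all_order fingroup perm all_algebra.
From mathcomp Require Import zify.
Set Implicit Arguments. Unset Strict Implicit. Unset Printing Implicit Defensive.
Import Order.TTheory GRing.Theory Num.Theory.
Local Open Scope ring_scope.

Lemma val_ord_pred n (i : 'I_n) :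
  val (ord_pred i) = if val i == 0%N then n.-1 else (val i).-1.
Proof.
case: i => i /= lt_in; case: eqP => [->|i_neq0].
  by rewrite add0n modn_small // prednK // (leq_ltn_trans _ lt_in).
have -> : (i + n).-1 = (i.-1 + n)%N by lia.
by rewrite modnDr modn_small //; lia.
Qed.

Lemma perm_incr_eq1 N (s : {perm 'I_N}) : {homo s : p q / (p < q)%N} -> s = 1%g.
Proof.
move=> s_incr; pose ltI := relpre (val : 'I_N -> nat) ltn.
have ltI_sorted : sorted ltI (enum 'I_N) by rewrite -sorted_map val_enum_ord iota_ltn_sorted.
have s_enum : map s (enum 'I_N) = enum 'I_N.
  apply: (irr_sorted_eq (leT := ltI)) => [p q r|p|||p]; rewrite /ltI /= ?ltnn //.
  - exact: ltn_trans.
  - exact: homo_sorted ltI_sorted.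
  by rewrite mem_enum -[p](permKV s) mem_map ?mem_enum //; apply: perm_inj.
apply/permP => p; rewrite perm1.
by have := congr1 (nth p ^~ p) s_enum; rewrite /= (nth_map p) ?nth_ord_enum // size_enum_ord.
Qed.

Lemma sum_int_band_eq0 n (l : 'I_n.+1 -> int) c p0 : l p0 = c ->
  (forall p, c <= l p <= c + 1) -> \sum_p l p = 0 -> forall p, l p = 0.
Proof.
move=> lp0 l_band sum0.
have shifted_sum : \sum_p (l p - c) = - (c * n.+1%:R).
  by rewrite sumrB sum0 sumr_const card_ord sub0r mulr_natr.
have shifted_le : \sum_p (l p - c) <= n%:R.
  rewrite (bigD1 p0) //= lp0 subrr add0r.
  have -> : n%:R = \sum_(p | p != p0) (1 : int).
    by rewrite sumr_const cardC1 card_ord.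
  by apply: ler_sum => p _; have := l_band p; lia.
have shifted_ge : 0 <= \sum_p (l p - c).
  by apply: sumr_ge0 => p _; have := l_band p; lia.
have c0 : c = 0 by move: shifted_le shifted_ge; rewrite shifted_sum; nia.
move: sum0 => /eqP; rewrite psumr_eq0 => [/allP l0 p|p _]; last first.
  by have := l_band p; rewrite c0; lia.
by apply/eqP; apply: l0; rewrite mem_index_enum.
Qed.

Lemma mul_rV_delta (R : pzSemiRingType) m p (r : 'rV[R]_m) (a : 'I_m) (b : 'I_p) :
  r *m delta_mx a b = r 0 a *: delta_mx 0 b.
Proof.
apply/rowP => j; rewrite !mxE (bigD1 a) //= big1 ?addr0 => [|c ne_ca].
  by rewrite !mxE !eqxx.
by rewrite mxE (negbTE ne_ca) mulr0.
Qed.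

Section ExtendedAffineWeyl.
Variable n : nat.
Implicit Types x y z : affW n.

Lemma affW_eq x y : aw_perm x = aw_perm y -> aw_exp x =1 aw_exp y -> x = y.
Proof. by case: x => p e; case: y => q f /= -> /ffunP ->. Qed.

Lemma mulawA x y z : aw_mul x (aw_mul y z) = aw_mul (aw_mul x y) z.
Proof. by apply: affW_eq => [|b] /=; rewrite ?mulgA // !ffunE permM addrA. Qed.

Lemma mulaw1 x : aw_mul x (aw_one n) = x.
Proof. by apply: affW_eq => [|b] /=; rewrite ?mul1g // !ffunE perm1 addr0. Qed.

Lemma mul1aw x : aw_mul (aw_one n) x = x.
Proof. by apply: affW_eq => [|b] /=; rewrite ?mulg1 // !ffunE add0r. Qed.

Lemma mulawV x : aw_mul x (aw_inv x) = aw_one n.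
Proof. by apply: affW_eq => [|b] /=; rewrite ?mulVg // !ffunE subrr. Qed.

Lemma mulVaw x : aw_mul (aw_inv x) x = aw_one n.
Proof. by apply: affW_eq => [|b] /=; rewrite ?mulgV // !ffunE permK addNr. Qed.

Lemma aw_iterSr z m :
  iter m.+1 (aw_mul z) (aw_one n) = aw_mul (iter m (aw_mul z) (aw_one n)) z.
Proof. by elim: m => [|m IHm] /=; rewrite ?mulaw1 ?mul1aw // -mulawA -IHm. Qed.

Lemma ord_det_mul x y : ord_det (aw_mul x y) = ord_det x + ord_det y.
Proof.
rewrite /ord_det /=; under eq_bigr do rewrite ffunE.
rewrite big_split /=; congr (_ + _).
by rewrite [RHS](reindex_inj (@perm_inj _ (aw_perm y))).
Qed.

Lemma ord_det_one : ord_det (aw_one n) = 0.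
Proof. by rewrite /ord_det big1 // => i _; rewrite ffunE. Qed.

Lemma ord_det_inv x : ord_det (aw_inv x) = - ord_det x.
Proof. by apply/eqP; rewrite -addr_eq0 addrC -ord_det_mul mulawV ord_det_one. Qed.

Lemma ord_det_iter z m : ord_det (iter m (aw_mul z) (aw_one n)) = ord_det z *+ m.
Proof. by elim: m => [|m IHm] /=; rewrite ?ord_det_one // ord_det_mul IHm mulrS. Qed.

End ExtendedAffineWeyl.

Lemma ord_det_w1 n : ord_det (w1tilde n.+1) = 1.
Proof. by rewrite /ord_det big_ord_recl big1 => [|i _]; rewrite ffunE // addr0. Qed.

Lemma ord_det_w1pow n (alpha : int) : ord_det (aw_pow (w1tilde n.+1) alpha) = alpha.
Proof.
case: alpha => m; rewrite /aw_pow ord_det_iter ?ord_det_inv ord_det_w1 ?natz //.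
by rewrite mulNrn natz NegzE.
Qed.

Lemma allowed_mulw1 n (x : affW n) a b d :
  allowed (aw_mul x (w1tilde n)) a b d = allowed x a b d.
Proof.
rewrite /allowed /= invMg !permM; set s := perm _.
move: ((aw_perm x)^-1%g a) ((aw_perm x)^-1%g b) => i j.
rewrite -[i](permKV s) -[j](permKV s) !permK !ffunE /=; congr (_ && _).
move: (s^-1 i)%g (s^-1 j)%g (aw_exp x (s _)) (aw_exp x (s _)) => i' j' u v.
rewrite /s !permE !val_ord_pred.
by case: i' j' => [i' ?] [j' ?] /=; case: eqP; case: eqP => *; apply/idP/idP; lia.
Qed.

Lemma allowed_mulw1V n (x : affW n) a b d :
  allowed (aw_mul x (aw_inv (w1tilde n))) a b d = allowed x a b d.
Proof. by rewrite -allowed_mulw1 -mulawA mulVaw mulaw1. Qed.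

Lemma allowed_diag0 n (x : affW n) a : allowed x a a 0.
Proof. by rewrite /allowed /= leqnn subrr lexx ltnn. Qed.

Lemma allowed_lt_deg_bound n (x : affW n) a b d : allowed x a b d -> (d < deg_bound x)%N.
Proof.
rewrite /allowed /deg_bound ltnS /=.
move: ((aw_perm x)^-1%g a) ((aw_perm x)^-1%g b) => i j /and3P[_ le_d _].
have [eq_ij|ne_ij] := eqVneq i j; first by move: le_d; rewrite eq_ij subrr; lia.
rewrite (bigD1 i) //= (bigD1 j) 1?eq_sym //=.
by move: le_d (\sum_(k | _) _)%N; lia.
Qed.

Definition diagonal_end n (x : affW n) : Prop :=
  forall a b d, allowed x a b d -> a = b /\ d = 0%N.

Lemma diagonal_end_one n : diagonal_end (aw_one n).
Proof.
move=> a b d; rewrite /allowed /= invg1 !perm1 !ffunE subrr lez_nat leqn0.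
case/and3P=> le_ba /eqP d0 le_ab; split=> //.
by apply: val_inj; move: le_ba le_ab; rewrite d0 /=; lia.
Qed.

Lemma diagonal_end_mulw1 n (x : affW n) : diagonal_end (aw_mul x (w1tilde n)) <-> diagonal_end x.
Proof. by split=> Dx a b d; [rewrite -allowed_mulw1 | rewrite allowed_mulw1]; apply: Dx. Qed.

Lemma diagonal_end_mulw1V n (x : affW n) :
  diagonal_end (aw_mul x (aw_inv (w1tilde n))) <-> diagonal_end x.
Proof. by split=> Dx a b d; [rewrite -allowed_mulw1V | rewrite allowed_mulw1V]; apply: Dx. Qed.

Lemma diagonal_end_w1pow n (alpha : int) : diagonal_end (aw_pow (w1tilde n) alpha).
Proof.
have diag_iter z m : (forall y, diagonal_end y -> diagonal_end (aw_mul y z)) ->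
    diagonal_end (iter m (aw_mul z) (aw_one n)).
  by move=> zP; elim: m => [|m IHm]; rewrite ?aw_iterSr; [apply: diagonal_end_one | apply: zP].
case: alpha => m; apply: diag_iter => y.
  by rewrite diagonal_end_mulw1.
by rewrite diagonal_end_mulw1V.
Qed.

Lemma diagonal_end_exp n (x : affW n) (p q : 'I_n) : diagonal_end x -> (p < q)%N ->
  [/\ aw_exp x q <= aw_exp x p, aw_exp x p <= aw_exp x q + 1 &
      aw_exp x p = aw_exp x q -> (aw_perm x p < aw_perm x q)%N].
Proof.
move=> Dx lt_pq; have neq_pq : p != q by rewrite neq_ltn lt_pq.
have off_diag u v d : u != v -> allowed x (aw_perm x u) (aw_perm x v) d = false.
  by move=> neq_uv; apply/negP => /Dx [/perm_inj eq_uv _]; rewrite eq_uv eqxx in neq_uv.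
have neq_qp : q != p by rewrite eq_sym.
move: (off_diag _ _ 1%N neq_pq) (off_diag _ _ 1%N neq_qp) (off_diag _ _ 0%N neq_pq).
rewrite /allowed !permK /= ltnNge (ltnW lt_pq) lt_pq /=.
rewrite !andbT; move: (aw_exp x p) (aw_exp x q) => u v no_pq1 no_qp1 no_pq0.
by split=> [||eq_uv]; move: no_pq1 no_qp1 no_pq0; rewrite ?eq_uv ?subrr; lia.
Qed.

Lemma diagonal_end_det0 n (x : affW n.+1) :
  diagonal_end x -> ord_det x = 0 -> x = aw_one n.+1.
Proof.
move=> Dx det0; set l := aw_exp x.
have l_band p : l ord_max <= l p <= l ord_max + 1.
  have [->|ne_p] := eqVneq p ord_max; first by lia.
  have lt_p : (p < @ord_max n)%N by move: ne_p (ltn_ord p); rewrite -val_eqE /=; lia.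
  by case: (diagonal_end_exp Dx lt_p) => ? ? _; apply/andP.
have l0 := sum_int_band_eq0 (erefl (l ord_max)) l_band det0.
apply: affW_eq => [|p] /=; last by rewrite ffunE l0.
apply: perm_incr_eq1 => p q lt_pq.
by case: (diagonal_end_exp Dx lt_pq) => _ _; apply; rewrite -/l !l0.
Qed.

Lemma diagonal_end_w1pow_uniq n (x : affW n.+1) :
  diagonal_end x -> x = aw_pow (w1tilde n.+1) (ord_det x).
Proof.
set w := w1tilde n.+1.
have pos m y : diagonal_end y -> ord_det y = m%:Z -> y = iter m (aw_mul w) (aw_one n.+1).
  elim: m y => [|m IHm] y Dy det_y; first exact: diagonal_end_det0.
  have Dy' : diagonal_end (aw_mul y (aw_inv w)) by apply/diagonal_end_mulw1V.
  rewrite aw_iterSr -(IHm _ Dy') -?mulawA ?mulVaw ?mulaw1 //.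
  by rewrite ord_det_mul ord_det_inv ord_det_w1 det_y; lia.
have neg m y : diagonal_end y -> ord_det y = - m%:Z ->
    y = iter m (aw_mul (aw_inv w)) (aw_one n.+1).
  elim: m y => [|m IHm] y Dy det_y; first exact: diagonal_end_det0.
  have Dy' : diagonal_end (aw_mul y w) by apply/diagonal_end_mulw1.
  rewrite aw_iterSr -(IHm _ Dy') -?mulawA ?mulawV ?mulaw1 //.
  by rewrite ord_det_mul ord_det_w1 det_y; lia.
move=> Dx; case det_x: (ord_det x) => [m|m] /=; first exact: pos.
by apply: (neg m.+1); rewrite // det_x NegzE.
Qed.

Section MirabolicCosets.
Variables (K : fieldType) (n : nat).
Local Notation M := 'M[K]_n.+1.

(* g Q = g' Q iff Qrow g = Qrow g', see [in_Q_mulP]. *)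
Definition Qrow m (A : 'M[K]_m.+1) : 'rV[K]_m.+1 := row ord_max (invmx A).

Definition nowhere_zero m (r : 'rV[K]_m) : Prop := forall a, r 0 a != 0.

Lemma in_Q_row (Q : M) : in_Q Q <-> row ord_max Q = row ord_max 1%:M.
Proof.
split=> [Q_last | Q_last j]; first by apply/rowP => j; rewrite !mxE Q_last eq_sym.
by have := congr1 (fun r : 'rV[K]_n.+1 => r 0 j) Q_last; rewrite !mxE eq_sym.
Qed.

Lemma Qrow_mulmx (A : M) : A \in unitmx -> Qrow A *m A = row ord_max 1%:M.
Proof. by move=> AU; rewrite /Qrow -row_mul mulVmx. Qed.

Lemma in_Q_mulP (D g g0 : M) : D \in unitmx -> g \in unitmx -> g0 \in unitmx ->
  in_Q (invmx (D *m g) *m g0) <-> Qrow g = Qrow g0 *m D.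
Proof.
move=> DU gU g0U; have DgU : D *m g \in unitmx by rewrite unitmx_mul DU gU.
have QDg : Qrow (D *m g) *m D = Qrow g.
  by apply: (can_inj (mulmxK gU)); rewrite -mulmxA !Qrow_mulmx.
rewrite in_Q_row row_mul -/(Qrow _) -(Qrow_mulmx g0U) -QDg.
split=> [/(can_inj (mulmxK g0U)) -> // | /(can_inj (mulmxK DU)) -> //].
Qed.

End MirabolicCosets.

Section AutLie.
Variables (K : fieldType) (n : nat) (x : affW n.+1) (g : 'M[K]_n.+1).
Local Notation FX := {ffun 'I_(deg_bound x) -> 'M[K]_n.+1}.

Lemma end_mask_is_linear : linear (@end_mask K n.+1 x).
Proof.
move=> c X Y; apply/ffunP => d; apply/matrixP => a b.
by rewrite !(ffunE, mxE); case: allowed; rewrite ?mulr0 ?addr0.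
Qed.

HB.instance Definition _ :=
  GRing.isLinear.Build K _ _ _ (@end_mask K n.+1 x) end_mask_is_linear.

Lemma stab_mapE (X : FX) : stab_map g X = Qrow g *m (\sum_d X d) *m g.
Proof. by rewrite /stab_map !row_mul. Qed.

Lemma stab_map_is_linear : linear (@stab_map K n x g).
Proof.
move=> c X Y; rewrite !stab_mapE.
rewrite (eq_bigr (fun d => c *: X d + Y d)) => [|d _]; last by rewrite !ffunE.
by rewrite big_split -scaler_sumr /= mulmxDr mulmxDl -scalemxAr -scalemxAl.
Qed.

HB.instance Definition _ :=
  GRing.isLinear.Build K _ _ _ (@stab_map K n x g) stab_map_is_linear.

Lemma mem_aut_lie (X : FX) :
  (X \in aut_lie x g) = (end_mask X == 0) && (stab_map g X == 0).
Proof. by rewrite memv_cap !memv_ker !lfunE. Qed.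

Lemma end_mask_eq0P (X : FX) :
  reflect (forall (d : 'I_(deg_bound x)) a b, ~~ allowed x a b d -> X d a b = 0)
          (end_mask X == 0).
Proof.
apply: (iffP eqP) => [X0 d a b not_ab | X0].
  by have := congr1 (fun Y : FX => Y d a b) X0; rewrite !(ffunE, mxE) (negbTE not_ab).
apply/ffunP => d; apply/matrixP => a b; rewrite !(ffunE, mxE).
by case: ifP => // /negbT /X0.
Qed.

Definition monomial_end (d : 'I_(deg_bound x)) a b : FX :=
  [ffun d' => (d' == d)%:R *: delta_mx a b].

Lemma monomial_endE (d d' : 'I_(deg_bound x)) a b a' b' :
  monomial_end d a b d' a' b' = ((d' == d) && (a' == a) && (b' == b))%:R.
Proof. by rewrite !(ffunE, mxE) -natrM mulnb andbA. Qed.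

Lemma end_mask_monomial (d : 'I_(deg_bound x)) a b :
  allowed x a b d -> end_mask (monomial_end d a b) = 0.
Proof.
move=> ab_d; apply/eqP/end_mask_eq0P => d' a' b' not_allowed; rewrite monomial_endE.
case: eqP => [eq_d|]; case: eqP => [eq_a|]; case: eqP => [eq_b|] //.
by subst; rewrite ab_d in not_allowed.
Qed.

Lemma stab_map_monomial (d : 'I_(deg_bound x)) a b :
  stab_map g (monomial_end d a b) = Qrow g 0 a *: (delta_mx 0 b *m g).
Proof.
rewrite stab_mapE (bigD1 d) //= big1 => [|d' ne_d]; last by rewrite ffunE (negbTE ne_d) scale0r.
by rewrite ffunE eqxx scale1r addr0 mul_rV_delta scalemxAl.
Qed.

Lemma aut_dim_eq0 : g \in unitmx -> diagonal_end x -> nowhere_zero (Qrow g) ->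
  aut_dim x g = 0%N.
Proof.
move=> gU Dx Qg_nz; apply/eqP; rewrite dimv_eq0 -subv0; apply/subvP => X.
rewrite mem_aut_lie memv0 => /andP[/end_mask_eq0P X_end /eqP X_stab].
set o : 'I_(deg_bound x) := ord0.
have X0 d a b : (a != b) || (d != o) -> X d a b = 0.
  move=> off; apply: X_end; apply: contraTN off => /Dx[-> d0].
  by rewrite eqxx -val_eqE /= d0.
set S := \sum_d X d.
have sumX c a : S c a = X o c a.
  by rewrite summxE (bigD1 o) //= big1 ?addr0 // => d ne_d; rewrite X0 ?ne_d ?orbT.
have QS0 : Qrow g *m S = 0.
  by apply: (can_inj (mulmxK gU)); rewrite mul0mx -stab_mapE.
have Xo0 a : X o a a = 0.
  have := congr1 (fun r : 'rV[K]_n.+1 => r 0 a) QS0.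
  rewrite mxE (bigD1 a) //= big1 => [|c ne_ca]; last by rewrite sumX X0 ?ne_ca ?mulr0.
  by rewrite [RHS]mxE addr0 sumX => /eqP; rewrite mulf_eq0 (negbTE (Qg_nz a)) => /eqP.
apply/eqP/ffunP => d; apply/matrixP => a b; rewrite !ffunE mxE.
have [<-|ne_ab] := eqVneq a b; last by rewrite X0 ?ne_ab.
by have [->|ne_d] := eqVneq d o; rewrite ?Xo0 // X0 ?ne_d ?orbT.
Qed.

Lemma aut_dim_eq0_inv : aut_dim x g = 0%N -> diagonal_end x /\ nowhere_zero (Qrow g).
Proof.
move/eqP; rewrite dimv_eq0 => /eqP lie0.
have X0 (X : FX) : end_mask X = 0 -> stab_map g X = 0 -> X = 0.
  by move=> X_end X_stab; apply/eqP; rewrite -memv0 -lie0 mem_aut_lie X_end X_stab !eqxx.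
set o : 'I_(deg_bound x) := ord0.
have Qg_nz a : Qrow g 0 a != 0.
  apply/negP => /eqP Qga0.
  have := X0 _ (end_mask_monomial (allowed_diag0 x a : allowed x a a o)).
  rewrite stab_map_monomial Qga0 scale0r => /(_ erefl) /ffunP /(_ o) /matrixP /(_ a a).
  by rewrite monomial_endE !eqxx !ffunE mxE => /eqP; rewrite oner_eq0.
split=> // a b d ab_d; set d' : 'I_(deg_bound x) := Ordinal (allowed_lt_deg_bound ab_d).
(* Subtracting a multiple of E_bb puts t^d E_ab into the Lie algebra. *)
set c := Qrow g 0 a / Qrow g 0 b.
have := X0 (monomial_end d' a b - c *: monomial_end o b b).
rewrite linearB linearZ /= !end_mask_monomial ?allowed_diag0 // scaler0 subr0.
rewrite linearB linearZ /= !stab_map_monomial scalerA divfK ?Qg_nz // subrr.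
move=> /(_ erefl erefl) /ffunP /(_ d') /matrixP /(_ a b).
rewrite !ffunE !mxE !eqxx !andbT mul1r.
have [eq_d|_] := eqVneq d' o; last by rewrite mul0r mulr0 subr0 => /eqP; rewrite oner_eq0.
have [eq_ab|_] := eqVneq a b; last by rewrite mulr0 mulr0 subr0 => /eqP; rewrite oner_eq0.
by split=> //; have := congr1 val eq_d.
Qed.

Lemma aut_dim_eq0P : g \in unitmx ->
  aut_dim x g = 0%N <-> diagonal_end x /\ nowhere_zero (Qrow g).
Proof. by move=> gU; split=> [/aut_dim_eq0_inv | [/(aut_dim_eq0 gU)]]. Qed.

End AutLie.

Section Gring.
Variables (K : fieldType) (n : nat).
Local Notation M := 'M[K]_n.+1.

Let N : M := \matrix_(i, j) (((i == ord0) && (j != ord0))%:R : K).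
Let P : M := tperm_mx ord0 ord_max.

Lemma gring_mulV : gring K n *m (P *m (1%:M - N)) = 1%:M.
Proof.
have NN : N *m N = 0.
  apply/matrixP => i j; rewrite !mxE big1 // => -[[|k] lt_k _];
    by rewrite !mxE ?andbF ?mulr0 ?mul0r.
have PP : P *m P = 1%:M by rewrite -perm_mxM tperm2 perm_mx1.
rewrite /gring -/N -/P -!mulmxA (mulmxA P) PP mul1mx mulmxDl mul1mx mulmxBr mulmx1 NN.
by rewrite subr0 subrK.
Qed.

Lemma gring_unit : gring K n \in unitmx.
Proof. by case: (mulmx1_unit gring_mulV). Qed.

Lemma gring_invmx : invmx (gring K n) = P *m (1%:M - N).
Proof. by rewrite -[RHS](mulKmx gring_unit) gring_mulV mulmx1. Qed.

Lemma Qrow_gring : nowhere_zero (Qrow (gring K n)).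
Proof.
move=> a; rewrite /Qrow gring_invmx.
rewrite !mxE (bigD1 ord0) //= big1 ?addr0 => [|[[|k] lt_k] //= _]; last first.
  by rewrite /P !mxE tpermR -val_eqE mul0r.
rewrite /P !mxE tpermR eqxx mul1r /= [ord0 == a]eq_sym.
by case: (a == ord0); rewrite ?subr0 ?sub0r ?oppr_eq0 oner_eq0.
Qed.

End Gring.

Section DiagonalAutomorphisms.
Variables (K : fieldType) (n : nat) (x : affW n.+1).

Definition const_diag (d : 'rV[K]_n.+1) : 'M[{poly K}]_n.+1 := map_mx polyC (diag_mx d).

Lemma eval1_const_diag d : eval1 (const_diag d) = diag_mx d.
Proof. by apply/matrixP => a b; rewrite !mxE hornerC. Qed.

Lemma is_aut_const_diag d : is_aut x (const_diag d) <-> nowhere_zero d.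
Proof.
have det_unit : (\det (const_diag d) \is a GRing.unit) = (\prod_a d 0 a != 0).
  by rewrite det_map_mx det_diag poly_unitE size_polyC coefC unitfE; case: (_ != 0).
rewrite /is_aut det_unit; split=> [[_ /prodf_neq0 d_nz] a | d_nz]; first exact: d_nz.
split; last by apply/prodf_neq0 => a _.
move=> a b d' not_allowed; rewrite !mxE coefC.
have [eq_ab|ne_ab] := eqVneq a b; last by rewrite mulr0n if_same.
by subst b; case: d' not_allowed => [|d'] //; rewrite allowed_diag0.
Qed.

Lemma diagonal_end_const_diag h : diagonal_end x -> is_end x h ->
  h = const_diag (\row_a (h a a)`_0).
Proof.
move=> Dx h_end; apply/matrixP => a b; apply/polyP => d; rewrite !mxE coefC.
have [eq_ab|ne_ab] := eqVneq a b; last first.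
  by rewrite mulr0n if_same; apply: h_end; apply: contra ne_ab => /Dx[->].
by subst b; case: d => [|d] //=; apply: h_end; apply/negP => /Dx[].
Qed.

End DiagonalAutomorphisms.

Lemma aut_orbit_diagonalP (K : fieldType) n (x : affW n.+1) (g g0 : 'M[K]_n.+1) :
  diagonal_end x -> g \in unitmx -> g0 \in unitmx -> nowhere_zero (Qrow g0) ->
  (exists h, is_aut x h /\ in_Q (invmx (eval1 h *m g) *m g0)) <-> nowhere_zero (Qrow g).
Proof.
move=> Dx gU g0U Qg0_nz; have diag_unit d : nowhere_zero d -> diag_mx d \in unitmx.
  by move=> d_nz; rewrite unitmxE det_diag unitfE; apply/prodf_neq0 => a _.
split=> [[h [h_aut h_Q]] a | Qg_nz].
  have h_diag := diagonal_end_const_diag Dx h_aut.1.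
  rewrite {}h_diag in h_aut h_Q.
  move: h_aut h_Q; set d := \row_a _ => /is_aut_const_diag d_nz.
  rewrite eval1_const_diag in_Q_mulP ?diag_unit // => ->.
  by rewrite mul_mx_diag mxE mulf_neq0.
pose d := \row_a (Qrow g 0 a / Qrow g0 0 a).
have d_nz : nowhere_zero d by move=> a; rewrite mxE mulf_neq0 ?invr_eq0.
exists (const_diag d); split; first exact/is_aut_const_diag.
rewrite eval1_const_diag in_Q_mulP ?diag_unit //.
apply/rowP => a; rewrite mul_mx_diag !mxE mulrC divfK //.
by have := Qg0_nz a; rewrite mxE.
Qed.

Lemma aut_dim_w1pow_gring (K : fieldType) n (alpha : int) :
  aut_dim (aw_pow (w1tilde n.+1) alpha) (gring K n) = 0%N.
Proof. exact: aut_dim_eq0 (gring_unit K n) (@diagonal_end_w1pow _ _) (@Qrow_gring K n). Qed.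

Theorem corollary8p6 (K : finFieldType) (n : nat) (alpha : int)
    (x : affW n.+1) (g : 'M[K]_n.+1) :
  generic_locus alpha x g <->
  (g \in unitmx /\ bun_iso x g (aw_pow (w1tilde n.+1) alpha) (gring K n)).
Proof.
have w1pow_diag := @diagonal_end_w1pow n.+1 alpha.
have orbitP := aut_orbit_diagonalP w1pow_diag _ (gring_unit K n) (@Qrow_gring K n).
split=> [[det_x gU x_min] | [gU [-> x_orbit]]].
  have x_dim0 : aut_dim x g = 0%N.
    apply/eqP; rewrite -leqn0 -(aut_dim_w1pow_gring K n alpha).
    by apply: x_min; [exact: ord_det_w1pow | exact: gring_unit].
  have [Dx Qg_nz] := (aut_dim_eq0P x gU).1 x_dim0.
  have x_w1pow : x = aw_pow (w1tilde n.+1) alpha.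
    by rewrite {1}(diagonal_end_w1pow_uniq Dx) det_x.
  split=> //; split=> //; rewrite x_w1pow.
  exact/(orbitP _ gU).
split=> [|//|y g' _ _]; first exact: ord_det_w1pow.
by rewrite (aut_dim_eq0 gU w1pow_diag ((orbitP _ gU).1 x_orbit)).
Qed.
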